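(* Let $n\ge1$ and $\beta_1,\dots,\beta_n\in\widehat{\mathbb{F}_q^\times}$ with $\beta_1\cdots\beta_n\neq\varepsilon$. Then for every $\nu\in\widehat{\mathbb{F}_q^\times}$, $$\frac{(\beta_1\cdots\beta_n)_\nu}{(\varepsilon)^\circ_\nu}=\frac{1}{(1-q)^{n-1}}\sum_{\substack{\nu_1,\dots,\nu_n\in\widehat{\mathbb{F}_q^\times}\\ \nu_1\cdots\nu_n=\nu}}\prod_{i=1}^n\frac{(\beta_i)_{\nu_i}}{(\varepsilon)^\circ_{\nu_i}}.$$
   Context: $\mathbb{F}_q$ is a finite field with $q$ elements. $\widehat{\mathbb{F}_q^\times}$ is the group of multiplicative characters $\mathbb{F}_q^\times\to\overline{\mathbb{Q}}^\times$, $\varepsilon$ the trivial character; $\delta(\eta)=1$ if $\eta=\varepsilon$, else $0$. $\psi$ is a fixed non-trivial additive character of $\mathbb{F}_q$. $g(\eta)=-\sum_{x\in\mathbb{F}_q^\times}\psi(x)\eta(x)$, $g^\circ(\eta)=q^{\delta(\eta)}g(\eta)$, $(\alpha)_\nu=g(\alpha\nu)/g(\alpha)$, $(\alpha)^\circ_\nu=g^\circ(\alpha\nu)/g^\circ(\alpha)$. *)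

From HB Require Import structures.
From mathcomp Require Import all_boot all_order all_algebra all_fingroup all_field all_character.
Set Implicit Arguments. Unset Strict Implicit. Unset Printing Implicit Defensive.
Import GRing.Theory Num.Theory.
Local Open Scope ring_scope.

(* Multiplicative characters of F^x : the (linear = irreducible, F^x being
   abelian) characters of the finite group [set: {unit F}], valued in algC
   (a model of \bar{Q}).  They are indexed by Iirr [set: {unit F}]; the
   trivial character epsilon is 1 = 'chi_0. *)
Notation Fx F := [set: {unit F}].

Definition is_nontriv_add_char (F : finFieldType) (psi : F -> algC) : Prop :=
  (forall x y : F, psi (x + y) = psi x * psi y) /\ (exists x : F, psi x != 1).

Definition gauss (F : finFieldType) (psi : F -> algC) (eta : 'CF(Fx F)) : algC :=
  - \sum_(x : {unit F}) psi (val x) * eta x.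

Definition cdelta (F : finFieldType) (eta : 'CF(Fx F)) : nat := (eta == 1)%:R.

Definition gaussc (F : finFieldType) (psi : F -> algC) (eta : 'CF(Fx F)) : algC :=
  (#|F|%:R) ^+ cdelta eta * gauss psi eta.

Definition poch (F : finFieldType) (psi : F -> algC) (alpha nu : 'CF(Fx F)) : algC :=
  gauss psi (alpha * nu) / gauss psi alpha.

Definition pochc (F : finFieldType) (psi : F -> algC) (alpha nu : 'CF(Fx F)) : algC :=
  gaussc psi (alpha * nu) / gaussc psi alpha.

From HB Require Import structures.
From mathcomp Require Import all_boot all_order all_algebra all_fingroup all_field all_character.
From mathcomp Require Import ring.
Set Implicit Arguments.
Unset Strict Implicit.
Unset Printing Implicit Defensive.
Import GRing.Theory Num.Theory.
Local Open Scope ring_scope.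

(* For a linear character l of F^x let B_l(u) = N delta(l) [u = 1] - conj l(1 - u),
   a finite analogue of (1 - u)^-l, where N = q - 1.  The product formula for
   Gauss sums, G(a) G(b) = J(a, b) G(ab) + b(-1) sum_x (ab)(x), together with
   G(m) G(conj m) = m(-1) q for m <> epsilon, shows that
   (l)_m / (epsilon)°_m = N delta(l) - conj J(m, l) = N '[B_l, m]:
   these ratios are the Fourier coefficients of B_l.  When
   beta = beta_1 ... beta_n <> epsilon, B_beta = (-1)^(n-1) B_beta_1 ... B_beta_n
   pointwise, and on the abelian group F^x the Fourier coefficients of a product
   are the convolutions of those of the factors; 1 - q = -N gives the claim. *)

Section AbelianConvolution.
Variables (gT : finGroupType) (G : {group gT}).
Hypothesis abelG : abelian G.

Lemma cfdot_prod_irr n (f : 'I_n -> 'CF(G)) (nu : Iirr G) :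
  '[\prod_(i < n) f i, 'chi_nu] =
  \sum_(nus : {ffun 'I_n -> Iirr G} | \prod_(i < n) 'chi_(nus i) == 'chi_nu)
     \prod_(i < n) '[f i, 'chi_(nus i)].
Proof.
have -> : \prod_i f i = \prod_i \sum_k '[f i, 'chi_k] *: 'chi_k.
  by apply: eq_bigr => i _; rewrite -cfun_sum_cfdot.
rewrite bigA_distr_bigA cfdot_suml [RHS]big_mkcond /=; apply: eq_bigr => nus _.
have /irrP[j Dj] : \prod_i 'chi[G]_(nus i) \in irr G.
  by apply/lin_char_irr/rpred_prod => i _; apply: char_abelianP.
rewrite scaler_prod cfdotZl Dj cfdot_irr (inj_eq irr_inj).
by case: eqP; rewrite ?mulr1 ?mulr0.
Qed.

End AbelianConvolution.

Lemma sum_add_char_eq0 (V : finZmodType) (R : idomainType) (psi : V -> R) :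
  {morph psi : x y / x + y >-> x * y} -> (exists a, psi a != 1) ->
  \sum_x psi x = 0.
Proof.
move=> psiD [a psia].
have shift : \sum_x psi x = psi a * \sum_x psi x.
  by rewrite mulr_sumr (reindex_inj (addrI a)); apply: eq_bigr => x _; rewrite psiD.
have /eqP : (1 - psi a) * \sum_x psi x = 0 by rewrite mulrBl mul1r -shift subrr.
by rewrite mulf_eq0 subr_eq0 eq_sym (negPf psia) => /eqP.
Qed.

Section GaussSum.
Variables (F : finFieldType) (R : comNzRingType) (psi : F -> R).
Hypotheses (psiD : {morph psi : x y / x + y >-> x * y}) (psi0 : psi 0 = 1).

Definition gauss_sum (a : F -> R) : R := \sum_x psi x * a x.

Lemma gauss_sum_dilate (a : F -> R) (c : F) :
    {morph a : x y / x * y} -> a 0 = 0 ->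
  \sum_x psi (c * x) * a x = a c^-1 * gauss_sum a + (c == 0)%:R * \sum_x a x.
Proof.
move=> aM a0; have [->|c0] := eqVneq c 0.
  rewrite invr0 a0 mul0r add0r mul1r.
  by apply: eq_bigr => x _; rewrite mul0r psi0 mul1r.
have cU : c^-1 \is a GRing.unit by rewrite unitfE invr_eq0.
rewrite mul0r addr0 mulr_sumr (reindex_inj (mulrI cU)).
by apply: eq_bigr => x _; rewrite mulVKf // aM mulrCA.
Qed.

Definition jacobi_sum (a b : F -> R) : R := \sum_x a x * b (1 - x).

Lemma eq_jacobi_sum a a' b b' :
  a =1 a' -> b =1 b' -> jacobi_sum a b = jacobi_sum a' b'.
Proof. by move=> eq_a eq_b; apply: eq_bigr => x _; rewrite eq_a eq_b. Qed.

Lemma jacobi_sumC a b : jacobi_sum a b = jacobi_sum b a.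
Proof.
rewrite /jacobi_sum (reindex_inj (can_inj (subKr 1))).
by apply: eq_bigr => x _; rewrite subKr mulrC.
Qed.

(* For characters b(-1)^2 = 1, and b(-1) * jacobi_sum b (c \o inv) is the
   classical jacobi_sum a b; this form avoids the substitution x |-> (1 - x)^-1. *)
Lemma gauss_sumM (a b c : F -> R) :
    {morph a : x y / x * y} -> {morph b : x y / x * y} -> a 0 = 0 ->
    (forall x, c x = a x * b x) ->
  gauss_sum a * gauss_sum b =
  b (-1) * (gauss_sum c * jacobi_sum b (fun x => c x^-1) + \sum_x c x).
Proof.
move=> aM bM a0 cE.
have cM : {morph c : x y / x * y} by move=> x y; rewrite !cE aM bM; ring.
have c0 : c 0 = 0 by rewrite cE a0 mul0r.
transitivity (\sum_u b u * \sum_x psi ((1 + u) * x) * c x).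
  rewrite mulr_suml (eq_bigr (fun x => \sum_u b u * (psi ((1 + u) * x) * c x))).
    by rewrite exchange_big; apply: eq_bigr => u _; rewrite mulr_sumr.
  move=> x _; have [->|x0] := eqVneq x 0.
    by rewrite a0 mulr0 mul0r big1 // => u _; rewrite c0 !mulr0.
  have xU : x \is a GRing.unit by rewrite unitfE.
  rewrite /gauss_sum mulr_sumr [in LHS](reindex_inj (mulrI xU)); apply: eq_bigr => u _.
  rewrite bM cE mulrDl mul1r psiD (mulrC u x); ring.
under eq_bigr do rewrite gauss_sum_dilate // mulrDr.
rewrite big_split /= mulrDr; congr (_ + _).
  rewrite /jacobi_sum mulr_sumr mulr_sumr (reindex_inj oppr_inj).
  by apply: eq_bigr => x _; rewrite -[- x]mulN1r bM; ring.
rewrite (bigD1 (-1)) //= subrr eqxx mul1r [X in _ + X]big1 ?addr0 // => u /negPf u_neq.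
by rewrite addrC addr_eq0 u_neq mul0r mulr0.
Qed.
End GaussSum.

Section UnitCharacters.
Variable F : finFieldType.
Local Notation G := (Fx F).
Local Notation N := (#|G|%:R : algC).

Lemma units_abelian : abelian G.
Proof. by apply/centsP => x _ y _; apply: val_inj; rewrite /= mulrC. Qed.

Lemma irr_lin_units (i : Iirr G) : 'chi[G]_i \is a linear_char.
Proof. exact: (char_abelianP _ units_abelian). Qed.

Lemma natr_card_units_neq0 : N != 0.
Proof. by rewrite pnatr_eq0 -lt0n cardG_gt0. Qed.

Lemma natr_card_finField : (#|F|%:R : algC) = N + 1.
Proof. by rewrite card_finField_unit natr1 prednK // (cardD1 0). Qed.

Lemma sum_units (R : nmodType) (h : F -> R) :
  h 0 = 0 -> \sum_(u : {unit F}) h (val u) = \sum_x h x.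
Proof.
move=> h0; rewrite [RHS](bigD1 0) //= h0 add0r.
rewrite (reindex_omap (val : {unit F} -> F) insub); last first.
  by move=> x x0; rewrite insubT ?unitfE.
by apply: eq_bigl => u; rewrite valK eqxx andbT -unitfE (valP u).
Qed.

Definition cfext (l : 'CF(G)) (x : F) : algC :=
  if insub x is Some u then l u else 0.

Lemma cfextE l (u : {unit F}) : cfext l (val u) = l u.
Proof. by rewrite /cfext valK. Qed.

Lemma cfext0 l : cfext l 0 = 0.
Proof. by rewrite /cfext insubN // unitr0. Qed.

Lemma neq0_unitP (x : F) : x != 0 -> exists u : {unit F}, x = val u.
Proof. by rewrite -unitfE => x0; exists (Sub x x0). Qed.

Lemma cfext_mul l m x : cfext (l * m) x = cfext l x * cfext m x.
Proof.
have [->|/neq0_unitP[u ->]] := eqVneq x 0; first by rewrite !cfext0 mul0r.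
by rewrite !cfextE cfunE.
Qed.

Lemma cfext_prod I (r : seq I) (P : pred I) (l : I -> 'CF(G)) x : x != 0 ->
  cfext (\prod_(i <- r | P i) l i) x = \prod_(i <- r | P i) cfext (l i) x.
Proof.
case/neq0_unitP=> u ->; rewrite cfextE prod_cfunE ?inE //.
by apply: eq_bigr => i _; rewrite cfextE.
Qed.

Lemma cfext_cfun1 x : cfext 1 x = (x != 0)%:R.
Proof.
have [->|/neq0_unitP[u ->]] := eqVneq x 0; first by rewrite cfext0.
by rewrite cfextE cfun1E inE.
Qed.

Section Linear.
Variable l : 'CF(G).
Hypothesis Ll : l \is a linear_char.

Lemma cfextM : {morph cfext l : x y / x * y}.
Proof.
move=> x y.
have [->|/neq0_unitP[u ->]] := eqVneq x 0; first by rewrite mul0r !cfext0 mul0r.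
have [->|/neq0_unitP[v ->]] := eqVneq y 0; first by rewrite mulr0 !cfext0 mulr0.
by rewrite -FinRing.val_unitM !cfextE lin_charM ?inE.
Qed.

Lemma cfext1 : cfext l 1 = 1.
Proof. by rewrite -FinRing.val_unit1 cfextE lin_char1. Qed.

Lemma cfext_conj x : (cfext l x)^* = cfext l x^-1.
Proof.
have [->|/neq0_unitP[u ->]] := eqVneq x 0; first by rewrite invr0 cfext0 conjC0.
by rewrite -FinRing.val_unitV !cfextE lin_charV_conj ?inE.
Qed.

Lemma cfext_mul_conj x : cfext l x * (cfext l x)^* = (x != 0)%:R.
Proof.
have [->|/neq0_unitP[u ->]] := eqVneq x 0; first by rewrite cfext0 mul0r.
by rewrite cfextE -normCK normC_lin_char ?inE // expr1n.
Qed.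

Lemma cfextN1_conj : (cfext l (-1))^* = cfext l (-1).
Proof. by rewrite cfext_conj invrN1. Qed.

Lemma sum_cfext : \sum_x cfext l x = N * (l == 1)%:R.
Proof.
have /irrP[i Dl] := lin_char_irr Ll.
rewrite -sum_units ?cfext0 //; under eq_bigr do rewrite cfextE.
have := cfdot_irr i 0; rewrite -Dl irr0 cfdotE => /(congr1 (fun z => N * z)).
rewrite mulVKf ?natr_card_units_neq0 // -irr_eq1 -Dl => <-.
by apply: eq_big => [u|u _]; rewrite ?inE // cfun1E inE conjC1 mulr1.
Qed.

End Linear.

Fact cfbinom_subproof (l : 'CF(G)) :
  is_class_fun <<G>>%g
    [ffun u : {unit F} => N * (l == 1)%:R * (val u == 1)%:R - (cfext l (1 - val u))^*].
Proof.
apply: intro_class_fun => [u v _ _ | u]; last by rewrite mem_gen ?inE.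
by rewrite conjgE ((centsP units_abelian) u _ v _) ?inE ?mulKg.
Qed.

Definition cfbinom (l : 'CF(G)) : 'CF(G) := Cfun 0 (cfbinom_subproof l).

Lemma cfbinomE l (u : {unit F}) :
  cfbinom l u = N * (l == 1)%:R * (val u == 1)%:R - (cfext l (1 - val u))^*.
Proof. exact: cfunE. Qed.

Lemma cfdot_cfbinom l m : m \is a linear_char ->
  N * '[cfbinom l, m] = N * (l == 1)%:R - (jacobi_sum (cfext m) (cfext l))^*.
Proof.
move=> Lm; rewrite cfdotE mulVKf ?natr_card_units_neq0 //.
rewrite (eq_bigl (fun=> true)) => [|u]; last by rewrite inE.
pose h x := (N * (l == 1)%:R * (x == 1)%:R - (cfext l (1 - x))^*) * (cfext m x)^*.
under eq_bigr do rewrite cfbinomE -cfextE -/(h _).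
rewrite sum_units /h ?cfext0 ?conjC0 ?mulr0 // (eq_bigr _ (fun x _ => mulrBl _ _ _)) sumrB.
congr (_ - _).
  rewrite (bigD1 1) //= big1 => [|x /negPf ->]; last by rewrite !mulr0 mul0r.
  by rewrite eqxx cfext1 // conjC1 !mulr1 addr0.
rewrite /jacobi_sum rmorph_sum; apply: eq_bigr => x _.
by rewrite rmorphM /= mulrC.
Qed.

Lemma cfbinom_prod n (l : 'I_n.+1 -> 'CF(G)) :
    (forall i, l i \is a linear_char) -> \prod_(i < n.+1) l i != 1 ->
  cfbinom (\prod_(i < n.+1) l i) = (-1) ^+ n *: \prod_(i < n.+1) cfbinom (l i).
Proof.
move=> Ll l1; apply/cfunP => u; rewrite cfbinomE [RHS]cfunE prod_cfunE ?inE //.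
rewrite (negPf l1) mulr0 mul0r sub0r.
have [u1 | u1] := eqVneq (val u) 1.
  have [i li1] : exists i, l i != 1.
    apply/existsP; apply: contraR l1 => /existsPn l_eq1.
    by apply/eqP/big1 => i _; apply/eqP; have := l_eq1 i; rewrite negbK.
  rewrite u1 subrr cfext0 conjC0 oppr0 (bigD1 i) //= cfbinomE (negPf li1).
  by rewrite u1 subrr cfext0 conjC0 mulr0 mul0r subr0 mul0r mulr0.
have u1_neq0 : 1 - val u != 0 by rewrite subr_eq0 eq_sym.
rewrite [X in _ * X](eq_bigr (fun i => - (cfext (l i) (1 - val u))^*)); last first.
  by move=> i _; rewrite cfbinomE (negPf u1) mulr0 sub0r.
rewrite prodrN card_ord cfext_prod // rmorph_prod mulrA -exprD addnS exprS addnn.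
by rewrite -mul2n exprM sqrrN !expr1n mulr1 mulN1r.
Qed.

End UnitCharacters.

Section CharacterGaussSums.
Variables (F : finFieldType) (psi : F -> algC).
Hypotheses (psiD : {morph psi : x y / x + y >-> x * y}) (psi0 : psi 0 = 1).
Hypothesis psi_nontriv : exists a, psi a != 1.
Local Notation G := (Fx F).
Local Notation N := (#|G|%:R : algC).
Local Notation q := (#|F|%:R : algC).
Local Notation GS l := (gauss_sum psi (cfext l)).

Lemma gaussE l : gauss psi l = - GS l.
Proof.
rewrite /gauss /gauss_sum -sum_units; last by rewrite cfext0 mulr0.
by under [in RHS]eq_bigr do rewrite cfextE.
Qed.

Lemma gauss_sum_cfun1 : GS 1 = -1.
Proof.
have /eqP := sum_add_char_eq0 psiD psi_nontriv.
rewrite (bigD1 0) //= psi0 addr_eq0 eq_sym eqr_oppLR => /eqP <-.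
rewrite /gauss_sum (bigD1 0) //= cfext0 mulr0 add0r.
by apply: eq_bigr => x x0; rewrite cfext_cfun1 x0 mulr1.
Qed.

Lemma gauss1 : gauss psi 1 = 1.
Proof. by rewrite gaussE gauss_sum_cfun1 opprK. Qed.

Lemma q_neq0 : q != 0.
Proof. by rewrite pnatr_eq0 -lt0n; apply/card_gt0P; exists 0. Qed.

Lemma jacobi_sum_cfun1 (a : F -> algC) :
  jacobi_sum a (cfext 1) = \sum_x a x - a 1.
Proof.
rewrite /jacobi_sum [X in _ = X - _](bigD1 1) //= addrAC subrr add0r (bigD1 1) //=.
rewrite subrr cfext0 mulr0 add0r; apply: eq_bigr => x x1.
by rewrite cfext_cfun1 subr_eq0 eq_sym x1 mulr1.
Qed.

Section Linear.
Variable l : 'CF(G).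
Hypothesis Ll : l \is a linear_char.

Lemma cfextN1_neq0 : cfext l (-1) != 0.
Proof.
apply/eqP => l0; have /eqP := cfext_mul_conj Ll (-1).
by rewrite l0 mul0r oppr_eq0 oner_eq0 eq_sym oner_eq0.
Qed.

Lemma gauss_sum_mul_conj :
  GS l * gauss_sum psi (fun x => (cfext l x)^*) = cfext l (-1) * (q - N * (l == 1)%:R).
Proof.
have conjM : {morph (fun x => (cfext l x)^*) : x y / x * y}.
  by move=> x y; rewrite /= cfextM // rmorphM.
rewrite (gauss_sumM (c := cfext 1) psiD psi0 (cfextM Ll) conjM (cfext0 l)); last first.
  by move=> x; rewrite cfext_mul_conj // cfext_cfun1.
rewrite cfextN1_conj // gauss_sum_cfun1; congr (_ * _).
rewrite (eq_jacobi_sum (b' := cfext 1) (frefl _)); last first.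
  by move=> x; rewrite !cfext_cfun1 invr_eq0.
rewrite jacobi_sum_cfun1 -rmorph_sum sum_cfext // cfext1 // conjC1.
rewrite sum_cfext ?cfun1_lin_char // eqxx rmorphM /= !conjC_nat natr_card_finField.
ring.
Qed.

Lemma gauss_neq0 : gauss psi l != 0.
Proof.
have [->|l1] := eqVneq l 1; first by rewrite gauss1 oner_eq0.
have : GS l * gauss_sum psi (fun x => (cfext l x)^*) != 0.
  by rewrite gauss_sum_mul_conj (negPf l1) mulr0 subr0 mulf_neq0 ?cfextN1_neq0 ?q_neq0.
by rewrite gaussE oppr_eq0; apply: contraNneq => ->; rewrite mul0r.
Qed.

End Linear.

Lemma pochc1 m : m != 1 -> pochc psi 1 m = gauss psi m / q.
Proof.
by move=> m1; rewrite /pochc /gaussc /cdelta mul1r (negPf m1) eqxx expr0 expr1 gauss1 mulr1 mul1r.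
Qed.

Lemma poch_ratio_jacobi l m : l \is a linear_char -> m \is a linear_char ->
  poch psi l m / pochc psi 1 m = N * (l == 1)%:R - (jacobi_sum (cfext m) (cfext l))^*.
Proof.
move=> Ll Lm; have [->|m1] := eqVneq m 1.
  rewrite /poch /pochc mulr1 mul1r !divff ?gauss_neq0 ?invr1 ?oner_eq0 //; last first.
    by rewrite /gaussc mulf_neq0 ?expf_neq0 ?q_neq0 ?gauss1 ?oner_eq0.
  rewrite jacobi_sumC jacobi_sum_cfun1 cfext1 // sum_cfext //.
  by rewrite rmorphB rmorphM /= conjC1 !conjC_nat opprB addrC subrK.
set J := (jacobi_sum _ _)^*; set d := N * _.
have conjM : {morph (fun x => (cfext m x)^*) : x y / x * y}.
  by move=> x y; rewrite /= cfextM // rmorphM.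
have LlM : l * m \is a linear_char by rewrite rpredM.
have twisted : GS (l * m) * gauss_sum psi (fun x => (cfext m x)^*) =
               cfext m (-1) * (GS l * J + d).
  rewrite (gauss_sumM (c := cfext l) psiD psi0 (cfextM LlM) conjM (cfext0 _)).
    rewrite cfextN1_conj // sum_cfext // /J rmorph_sum; congr (_ * (_ * _ + _)).
    by apply: eq_bigr => x _; rewrite rmorphM /= (cfext_conj Ll).
  move=> x; rewrite cfext_mul -mulrA cfext_mul_conj //.
  by have [->|_] := eqVneq x 0; rewrite ?cfext0 ?mul0r ?mulr1.
have Gm_conj := gauss_sum_mul_conj Lm; rewrite (negPf m1) mulr0 subr0 in Gm_conj.
have Gl_d : GS l * d = - d.
  by rewrite /d; case: eqP => [->|_]; rewrite ?gauss_sum_cfun1 ?mulN1r // !mulr0 oppr0.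
have Gl0 : GS l != 0 by rewrite -oppr_eq0 -gaussE gauss_neq0.
have Em0 := cfextN1_neq0 Lm.
have Gm_conj0 : gauss_sum psi (fun x => (cfext m x)^*) != 0.
  apply/eqP => Gm_conj_eq0; move/eqP: Gm_conj.
  by rewrite Gm_conj_eq0 mulr0 eq_sym mulf_eq0 (negPf Em0) (negPf q_neq0).
rewrite /poch pochc1 // !gaussE.
rewrite -[GS (l * m)](mulfK Gm_conj0) twisted -[GS m](mulfK Gm_conj0) Gm_conj.
rewrite -[d in LHS]opprK -Gl_d; field.
by rewrite Gl0 Gm_conj0 Em0 q_neq0.
Qed.

Lemma poch_ratio_cfdot l m : l \is a linear_char -> m \is a linear_char ->
  poch psi l m / pochc psi 1 m = N * '[cfbinom l, m].
Proof. by move=> Ll Lm; rewrite poch_ratio_jacobi // cfdot_cfbinom. Qed.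

End CharacterGaussSums.

(* is_nontriv_add_char allows psi = 0, for which every Gauss sum vanishes. *)
Lemma poch_degenerate (F : finFieldType) (psi : F -> algC) l m :
  {morph psi : x y / x + y >-> x * y} -> psi 0 != 1 -> poch psi l m = 0.
Proof.
move=> psiD psi0_neq1.
have psi0 : psi 0 = 0.
  have /eqP : psi 0 * (psi 0 - 1) = 0 by rewrite mulrBr mulr1 -psiD addr0 subrr.
  by rewrite mulf_eq0 subr_eq0 (negPf psi0_neq1) orbF => /eqP.
rewrite /poch /gauss big1 ?oppr0 ?mul0r // => u _.
by rewrite -[val u]addr0 psiD psi0 !mulr0 mul0r.
Qed.

Theorem lemma3p22 (F : finFieldType) (psi : F -> algC)
    (hpsi : is_nontriv_add_char psi)
    (n : nat) (hn : (1 <= n)%N) (beta : 'I_n -> Iirr (Fx F))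
    (hbeta : \prod_(i < n) 'chi_(beta i) != 1)
    (nu : Iirr (Fx F)) :
  poch psi (\prod_(i < n) 'chi_(beta i)) 'chi_nu / pochc psi 1 'chi_nu =
  (1 - (#|F|%:R : algC)) ^- n.-1 *
  \sum_(nus : {ffun 'I_n -> Iirr (Fx F)} |
          \prod_(i < n) 'chi_(nus i) == 'chi_nu)
     \prod_(i < n) (poch psi 'chi_(beta i) 'chi_(nus i)
                    / pochc psi 1 'chi_(nus i)).
Proof.
case: n hn beta hbeta => // k _ beta hbeta; case: hpsi => psiD psi_nontriv.
have [psi0 | psi0_neq1] := eqVneq (psi 0) 1; last first.
  rewrite poch_degenerate // mul0r big1 ?mulr0 // => nus _.
  by rewrite big_ord_recl poch_degenerate // !mul0r.
have lin := @irr_lin_units F.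
have Lbeta : \prod_(i < k.+1) 'chi_(beta i) \is a linear_char.
  by apply: rpred_prod => i _; exact: lin.
rewrite poch_ratio_cfdot // cfbinom_prod // cfdotZl cfdot_prod_irr ?units_abelian //.
under [in RHS]eq_bigr do under eq_bigr do rewrite poch_ratio_cfdot //.
under [in RHS]eq_bigr do rewrite big_split /= prodr_const card_ord.
rewrite -mulr_sumr natr_card_finField /=.
have N0 := @natr_card_units_neq0 F; set N := (#|_|%:R : algC) in N0 *.
rewrite (_ : 1 - (N + 1) = - N); last by rewrite opprD addrCA subrr addr0.
rewrite [(- N) ^+ k]exprNn invfM invr_sign exprS; field.
by rewrite expf_neq0.
Qed.
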